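(* Let $n\ge 2$ and let $T_1,\dots,T_{n-1}$ and $D_1,\dots,D_n$ be the Demazure–Lustig operators and the $q$-Dunkl operators described in the context. Then for $1\le i\le n-1$, $$T_i\,D_{i+1}=t\,D_i\,T_i^{-1},\qquad T_i\,D_i=D_{i+1}\,T_i+(t-1)D_i,$$ and for all $1\le i\le n-1$ and $1\le j\le n$ with $j\ne i,i+1$, $T_iD_j=D_jT_i$.
   Context: Let $n\ge1$, let $q,t$ be generic parameters (indeterminates), and let operators act on Laurent polynomials in $x=(x_1,\dots,x_n)$ with coefficients in $\mathbb{Q}(q,t)$; $x_i$ also denotes multiplication by $x_i$. Let $s_i$ ($1\le i\le n-1$) interchange $x_i$ and $x_{i+1}$, and let $\tau_i$ be the $q$-shift $(\tau_if)(x_1,\dots,x_n)=f(x_1,\dots,qx_i,\dots,x_n)$. The Demazure–Lustig operators are $T_i=t+\frac{tx_i-x_{i+1}}{x_i-x_{i+1}}(s_i-1)$, $1\le i\le n-1$; they satisfy $(T_i-t)(T_i+1)=0$, hence are invertible with $T_i^{-1}=t^{-1}-1+t^{-1}T_i$. Let $\omega=s_{n-1}\cdots s_2s_1\tau_1$ (composition of operators), and for $1\le i\le n$ let $Y_i=t^{-n+i}\,T_i\cdots T_{n-1}\,\omega\,T_1^{-1}\cdots T_{i-1}^{-1}$. For $i<j$ let $T_{ij}^{-1}=T_i^{-1}T_{i+1}^{-1}\cdots T_{j-2}^{-1}T_{j-1}^{-1}T_{j-2}^{-1}\cdots T_i^{-1}$. The $q$-Dunkl operators are $$D_i=x_i^{-1}\Bigl(1-t^{n-1}\Bigl[1+(t^{-1}-1)\sum_{j=i+1}^n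 t^{j-i}T_{ij}^{-1}\Bigr]Y_i\Bigr),\qquad 1\le i\le n,$$ so in particular $D_n=x_n^{-1}(1-t^{n-1}Y_n)$. *)

From HB Require Import structures.
From mathcomp Require Import all_boot all_order all_algebra.
From mathcomp Require Import mpoly.
Set Implicit Arguments. Unset Strict Implicit. Unset Printing Implicit Defensive.
Import Order.TTheory GRing.Theory FracField.
Notation "x %:F" := (@FracField.tofrac _ x).
Local Open Scope ring_scope.

Section DL.
Variables (K : fieldType) (n : nat) (q t : K).

Definition Pol := {mpoly K[n]}.
Definition RF := {fraction Pol}.

(* the variable x_k (1-based, 1 <= k <= n), as a polynomial *)
Definition xp (k : nat) : Pol :=
  oapp (fun j : 'I_n => 'X_j) 0 (insub k.-1).
Definition xr (k : nat) : RF := (xp k)%:F.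
Definition cst (c : K) : RF := (c%:MP : Pol)%:F.

Definition rf_map (f : Pol -> Pol) (r : RF) : RF :=
  (f (\n_(repr r)))%:F / (f (\d_(repr r)))%:F.

(* s_i : interchange x_i and x_{i+1} *)
Definition s_pol (i : nat) (p : Pol) : Pol :=
  p \mPo [tuple (if val j == i.-1 then xp i.+1
                 else if val j == i then xp i else 'X_j) | j < n].
Definition s_op (i : nat) : RF -> RF := rf_map (s_pol i).

(* tau_i : x_i |-> q x_i *)
Definition tau_pol (i : nat) (p : Pol) : Pol :=
  p \mPo [tuple (if val j == i.-1 then q%:MP * 'X_j else 'X_j) | j < n].
Definition tau_op (i : nat) : RF -> RF := rf_map (tau_pol i).

(* product A_1 A_2 ... A_k of operators (composition, rightmost first) *)
Definition oprod (fs : seq (RF -> RF)) : RF -> RF :=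
  foldr (fun g acc => g \o acc) id fs.

Definition T_op (i : nat) (f : RF) : RF :=
  cst t * f + (cst t * xr i - xr i.+1) / (xr i - xr i.+1) * (s_op i f - f).
Definition Tinv_op (i : nat) (f : RF) : RF :=
  cst (t^-1 - 1) * f + cst t^-1 * T_op i f.

(* omega = s_{n-1} ... s_2 s_1 tau_1 *)
Definition omega_op : RF -> RF :=
  oprod (map s_op (rev (iota 1 n.-1)) ++ [:: tau_op 1]).

(* Y_i = t^{-n+i} T_i ... T_{n-1} omega T_1^{-1} ... T_{i-1}^{-1} *)
Definition Y_op (i : nat) (f : RF) : RF :=
  cst (t ^- (n - i)) *
  oprod (map T_op (iota i (n - i)) ++ [:: omega_op] ++
         map Tinv_op (iota 1 i.-1)) f.

(* T_{ij}^{-1} = T_i^{-1} ... T_{j-1}^{-1} T_{j-2}^{-1} ... T_i^{-1} *)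
Definition Tinv_ij (i j : nat) : RF -> RF :=
  oprod (map Tinv_op (iota i (j - i)) ++ map Tinv_op (rev (iota i (j.-1 - i)))).

Definition D_op (i : nat) (f : RF) : RF :=
  (xr i)^-1 * (f - cst (t ^+ n.-1) *
     (Y_op i f + cst (t^-1 - 1) *
        \sum_(i.+1 <= j < n.+1) cst (t ^+ (j - i)) * Tinv_ij i j (Y_op i f))).

Definition laurent (r : RF) : Prop :=
  exists (p : Pol) (k : nat), r = p%:F / ((\prod_(j < n) 'X_j) ^+ k : Pol)%:F.

End DL.

(* the coefficient field Q(q,t) and the indeterminates q, t *)
Definition Qqt := {fraction {mpoly rat[2]}}.
Definition q0 : Qqt := ('X_(@ord0 1) : {mpoly rat[2]})%:F.
Definition t0 : Qqt := ('X_(@ord_max 1) : {mpoly rat[2]})%:F.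

(* The substitutions s_i and omega extend monomial substitutions of the polynomial
   ring to automorphisms of the field of rational functions.  Hence each T_i is the
   Demazure-Lustig operator of a field automorphism, and the quadratic relation, the
   braid relations, omega T_(i+1) = T_i omega and T_i x_(i+1)^-1 T_i = t x_i^-1
   reduce to identities in a field.  The rest follows from these relations alone:
   T_i Y_(i+1) T_i = t Y_i and T_i Y_j = Y_j T_i for j <> i, i+1, and the sum
   S_i = sum_(j > i) t^(j-i) T_ij^-1 satisfies S_i = t T_i^-1 + t T_i^-1 S_(i+1) T_i^-1
   and commutes with T_k for k <> i-1, i.  Substituting these into D_i gives the
   three relations. *)

From HB Require Import structures.
From mathcomp Require Import all_boot all_algebra.
From mathcomp Require Import mpoly.
From mathcomp Require Import ring zify.
Set Implicit Arguments. Unset Strict Implicit. Unset Printing Implicit Defensive.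
Import GRing.Theory.
Local Open Scope ring_scope.

(** * Extending polynomial morphisms to rational functions *)

Lemma frac_numden (R : idomainType) (r : {fraction R}) :
  r = (\n_(repr r))%:F / (\d_(repr r))%:F.
Proof.
rewrite -[r in LHS]reprK; set x := repr r.
unlock FracField.tofrac.
transitivity (\pi_({fraction R})%qT
  (FracField.mulf (Ratio \n_x 1) (FracField.invf (Ratio \d_x 1)))).
  apply/eqmodP; rewrite /= /FracField.equivf /FracField.mulf /FracField.invf /=.
  by rewrite !numden_Ratio ?oner_neq0 ?mulr1 ?mul1r ?denom_ratioP // mulrC.
by rewrite FracField.pi_mul FracField.pi_inv.
Qed.

Lemma comp_mpolyA (R : comNzRingType) (k m p : nat) (P : {mpoly R[k]})
    (lq : k.-tuple {mpoly R[m]}) (lr : m.-tuple {mpoly R[p]}) :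
  P \mPo lq \mPo lr = P \mPo [tuple tnth lq i \mPo lr | i < k].
Proof.
rewrite (comp_mpolyEX P) raddf_sum (comp_mpolyEX P) /=.
apply: eq_bigr => M _; rewrite comp_mpolyZ; congr (_ *: _).
rewrite !comp_mpolyX rmorph_prod /=; apply: eq_bigr => i _.
by rewrite rmorphXn /= tnth_mktuple.
Qed.

Section RmorphismOfEq.
Variables (R S : nzRingType) (g : {rmorphism R -> S}) (f : R -> S).
Hypothesis fg : f =1 g.

Fact eq_rmorph_is_zmod_morphism : zmod_morphism f.
Proof. by move=> x y; rewrite !fg rmorphB. Qed.

Fact eq_rmorph_is_monoid_morphism : monoid_morphism f.
Proof. by split=> [|x y]; rewrite !fg ?rmorph1 ?rmorphM. Qed.

Definition eq_rmorph : {rmorphism R -> S} :=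
  HB.pack f (GRing.isZmodMorphism.Build R S f eq_rmorph_is_zmod_morphism)
            (GRing.isMonoidMorphism.Build R S f eq_rmorph_is_monoid_morphism).

End RmorphismOfEq.

Section FractionMap.
Variables (K : fieldType) (n : nat).
Local Notation Pol := (Pol K n).
Local Notation RF := (RF K n).

Section Injective.
Variable f : {rmorphism Pol -> Pol}.
Hypothesis f_inj : injective f.

Lemma rf_map_frac a b : b != 0 -> rf_map f (a%:F / b%:F) = (f a)%:F / (f b)%:F.
Proof.
move=> b0; rewrite /rf_map; set r := a%:F / b%:F.
have d0 : \d_(repr r) != 0 := denom_ratioP _.
move: (frac_numden r) => /eqP; rewrite {1}/r.
rewrite eqr_div ?tofrac_eq0 // -!tofracM tofrac_eq => /eqP E.
have fnz u : u != 0 -> (f u)%:F != 0 by rewrite tofrac_eq0 raddf_eq0.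
apply/eqP; rewrite eqr_div ?fnz // -!tofracM -!rmorphM.
by rewrite tofrac_eq E.
Qed.

Lemma rf_map_tofrac a : rf_map f a%:F = (f a)%:F.
Proof. by rewrite -[a%:F]divr1 -tofrac1 rf_map_frac ?oner_neq0 // rmorph1 tofrac1 divr1. Qed.

Lemma rf_map_is_zmod_morphism : zmod_morphism (rf_map f).
Proof.
move=> x y; rewrite [x]frac_numden [y]frac_numden.
set a := \n_(repr x); set b := \d_(repr x); set c := \n_(repr y); set d := \d_(repr y).
have b0 : b != 0 := denom_ratioP _; have d0 : d != 0 := denom_ratioP _.
have fnz u : u != 0 -> f u != 0 by rewrite raddf_eq0.
rewrite -mulNr addf_div ?tofrac_eq0 // -tofracN -!tofracM -tofracD.
rewrite !rf_map_frac ?mulf_neq0 // rmorphD !rmorphM rmorphN.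
by rewrite -mulNr addf_div ?tofrac_eq0 ?fnz // -tofracN -!tofracM -tofracD.
Qed.

Lemma rf_map_is_monoid_morphism : monoid_morphism (rf_map f).
Proof.
split; first by rewrite -tofrac1 rf_map_tofrac rmorph1.
move=> x y; rewrite [x]frac_numden [y]frac_numden.
set a := \n_(repr x); set b := \d_(repr x); set c := \n_(repr y); set d := \d_(repr y).
have b0 : b != 0 := denom_ratioP _; have d0 : d != 0 := denom_ratioP _.
rewrite mulf_div -!tofracM !rf_map_frac ?mulf_neq0 // !rmorphM.
by rewrite mulf_div -!tofracM.
Qed.

Definition frac_rmorph : {rmorphism RF -> RF} :=
  HB.pack (rf_map f)
    (GRing.isZmodMorphism.Build RF RF (rf_map f) rf_map_is_zmod_morphism)
    (GRing.isMonoidMorphism.Build RF RF (rf_map f) rf_map_is_monoid_morphism).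

End Injective.

Lemma rf_map_comp (f g : {rmorphism Pol -> Pol}) :
  injective f -> injective g -> forall r, rf_map f (rf_map g r) = rf_map (f \o g) r.
Proof.
move=> f_inj g_inj r; rewrite [r]frac_numden.
have d0 : \d_(repr r) != 0 := denom_ratioP _.
have gd0 : g \d_(repr r) != 0 by rewrite raddf_eq0.
by rewrite (rf_map_frac (inj_comp f_inj g_inj)) // (rf_map_frac g_inj) // (rf_map_frac f_inj).
Qed.

Lemma rf_map_ext (f g : Pol -> Pol) r : f =1 g -> rf_map f r = rf_map g r.
Proof. by move=> fg; rewrite /rf_map !fg. Qed.

Lemma rf_map_id r : rf_map (@id Pol) r = r.
Proof. by rewrite [RHS]frac_numden. Qed.

End FractionMap.

HB.instance Definition _ (K : fieldType) (n : nat) :=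
  GRing.RMorphism.copy (@cst K n) (@FracField.tofrac (Pol K n) \o @mpolyC n K).

Section MonomialSubstitution.
Variables (K : fieldType) (n : nat).
Local Notation Pol := (Pol K n).
Local Notation xp := (xp K n).

Lemma xp_ord (j : 'I_n) : xp j.+1 = 'X_j.
Proof. by rewrite /xp /= valK. Qed.

Definition msubst (c : nat -> K) (s : nat -> nat) : Pol -> Pol :=
  comp_mpoly [tuple c j.+1 *: xp (s j.+1) | j < n].

Lemma msubst_xp c s k : (0 < k <= n)%N -> msubst c s (xp k) = c k *: xp (s k).
Proof.
case: k => // k /= kn.
by rewrite -[k]/(nat_of_ord (Ordinal kn)) xp_ord /msubst comp_mpolyXU -tnth_nth tnth_mktuple.
Qed.

Lemma msubst_C c s a : msubst c s a%:MP = a%:MP.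
Proof. exact: comp_mpolyC. Qed.

Lemma msubst_comp c s c' s' p :
    (forall k, (0 < k <= n)%N -> (0 < s' k <= n)%N) ->
  msubst c s (msubst c' s' p) = msubst (fun k => c' k * c (s' k)) (s \o s') p.
Proof.
move=> s'_in; rewrite /msubst comp_mpolyA; congr comp_mpoly; apply: eq_mktuple => j.
have := msubst_xp c s (s'_in j.+1 (ltn_ord j)); rewrite /msubst => xpE.
by rewrite tnth_mktuple comp_mpolyZ xpE scalerA.
Qed.

Lemma msubst_ext c s c' s' p :
    (forall k, (0 < k <= n)%N -> c k = c' k) ->
    (forall k, (0 < k <= n)%N -> s k = s' k) ->
  msubst c s p = msubst c' s' p.
Proof.
move=> cc' ss'; congr comp_mpoly; apply: eq_mktuple => j.
by rewrite cc' ?ss' //; apply: ltn_ord.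
Qed.

Lemma msubst_id p : msubst (fun=> 1) id p = p.
Proof.
rewrite -[RHS]comp_mpoly_id; congr comp_mpoly; apply: eq_mktuple => j.
by rewrite scale1r xp_ord.
Qed.

Lemma msubst_inj c s s' :
    (forall k, (0 < k <= n)%N -> c k != 0) ->
    (forall k, (0 < k <= n)%N -> (0 < s k <= n)%N) ->
    (forall k, (0 < k <= n)%N -> s' (s k) = k) ->
  injective (msubst c s).
Proof.
move=> c_neq0 s_in s'K.
apply: (can_inj (g := msubst (fun k => (c (s' k))^-1) s')) => p.
rewrite msubst_comp // -[RHS]msubst_id; apply: msubst_ext => k k_in /=.
  by rewrite s'K // mulfV ?c_neq0.
exact: s'K.
Qed.

End MonomialSubstitution.

HB.instance Definition _ K n c s := GRing.RMorphism.on (@msubst K n c s).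

(** * The substitutions s_i and omega *)

(* Index maps on the 1-based variable indices 1..n (their values at 0 are junk).
   [idx_rot m] is the index map of s_m ... s_1 tau_1, i.e. x_1 |-> x_(m+1) and
   x_k |-> x_(k-1) for 2 <= k <= m+1; [idx_unrot m] is its inverse. *)
Definition idx_swap (i k : nat) : nat :=
  if k == i then i.+1 else if k == i.+1 then i else k.
Definition idx_rot (m k : nat) : nat :=
  if k == 1 then m.+1 else if (k <= m.+1)%N then k.-1 else k.
Definition idx_unrot (m k : nat) : nat :=
  if k == m.+1 then 1 else if (k <= m)%N then k.+1 else k.

Ltac no_if x := lazymatch x with context [if _ then _ else _] => fail | _ => idtac end.
Ltac idx_lia := rewrite /idx_swap /idx_rot /idx_unrot /=;
  repeat match goal with
  | |- context [@eq_op _ ?x ?y] => no_if x; no_if y; case: (@eqP nat x y) => ? /=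
  | |- context [(?x <= ?y)%N] => no_if x; no_if y; case: (leqP x y) => ? /=
  end; lia.

Section SubstitutionOperators.
Variables (K : fieldType) (n : nat).
Local Notation Pol := (Pol K n).
Local Notation RF := (RF K n).
Local Notation msubst := (@msubst K n).
Local Notation xr := (xr K n).
Local Notation cst := (@cst K n).

Lemma rf_msubst_xr c s k : injective (msubst c s) -> (0 < k <= n)%N ->
  rf_map (msubst c s) (xr k) = cst (c k) * xr (s k).
Proof.
by move=> inj k_in; rewrite /xr rf_map_tofrac //= msubst_xp // -mul_mpolyC tofracM.
Qed.

Lemma rf_msubst_cst c s a : injective (msubst c s) -> rf_map (msubst c s) (cst a) = cst a.
Proof. by move=> inj; rewrite /cst rf_map_tofrac //= msubst_C. Qed.

Lemma rf_msubst_ext c s c' s' f :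
    (forall k, (0 < k <= n)%N -> c k = c' k) ->
    (forall k, (0 < k <= n)%N -> s k = s' k) ->
  rf_map (msubst c s) f = rf_map (msubst c' s') f.
Proof. by move=> cc' ss'; apply: rf_map_ext => p; apply: msubst_ext. Qed.

Lemma rf_msubst_id f : rf_map (msubst (fun=> 1) id) f = f.
Proof. by rewrite -[RHS]rf_map_id; apply: rf_map_ext => p; rewrite msubst_id. Qed.

Lemma oprod_cat (l1 l2 : seq (RF -> RF)) f : oprod (l1 ++ l2) f = oprod l1 (oprod l2 f).
Proof. by elim: l1 => //= g l ->. Qed.

End SubstitutionOperators.

Section Swaps.
Variables (K : fieldType) (n : nat).
Local Notation RF := (RF K n).
Local Notation msubst := (@msubst K n).
Local Notation xr := (xr K n).
Local Notation cst := (@cst K n).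
Local Notation s_op := (@s_op K n).

Lemma s_polE i : (0 < i)%N -> s_pol i = msubst (fun=> 1) (idx_swap i).
Proof.
move=> i_gt0; rewrite /s_pol /msubst.
suff -> : [tuple (if val j == i.-1 then xp K n i.+1 else if val j == i then xp K n i else 'X_j) | j < n]
        = [tuple 1 *: xp K n (idx_swap i j.+1) | j < n] by [].
apply: eq_mktuple => j; rewrite scale1r -xp_ord /idx_swap.
by do !case: eqP => /= ?; try (congr xp; lia); lia.
Qed.

Lemma s_opE i : (0 < i)%N -> s_op i = rf_map (msubst (fun=> 1) (idx_swap i)).
Proof. by move=> i_gt0; rewrite /s_op s_polE. Qed.

Lemma swap_inj i : (0 < i < n)%N -> injective (msubst (fun=> 1) (idx_swap i)).
Proof.
move=> i_in; apply: (msubst_inj (s' := idx_swap i)) => k k_in; first exact: oner_neq0.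
  by idx_lia.
by idx_lia.
Qed.

Definition s_rmorph i (i_in : (0 < i < n)%N) : {rmorphism RF -> RF} :=
  eq_rmorph (g := frac_rmorph (swap_inj i_in)) (fun f => congr1 (@^~ f) (s_opE (proj1 (andP i_in)))).

Section OneSwap.
Variable i : nat.
Hypothesis i_in : (0 < i < n)%N.
Let i_gt0 : (0 < i)%N. Proof. by case/andP: i_in. Qed.
Let sw_inj := swap_inj i_in.

Lemma s_op_cst a : s_op i (cst a) = cst a.
Proof. by rewrite (s_opE i_gt0) rf_msubst_cst. Qed.

Lemma s_op_xr k : (0 < k <= n)%N -> s_op i (xr k) = xr (idx_swap i k).
Proof. by move=> k_in; rewrite (s_opE i_gt0) rf_msubst_xr // rmorph1 mul1r. Qed.

Lemma s_opK : involutive (s_op i).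
Proof.
move=> f; rewrite (s_opE i_gt0) (rf_map_comp sw_inj sw_inj) -[RHS]rf_msubst_id.
apply: rf_map_ext => p /=; rewrite msubst_comp; last by move=> k k_in; idx_lia.
by apply: msubst_ext => k k_in /=; [rewrite mulr1 | idx_lia].
Qed.

End OneSwap.

Lemma s_op_braid i f : (0 < i)%N -> (i.+1 < n)%N ->
  s_op i (s_op i.+1 (s_op i f)) = s_op i.+1 (s_op i (s_op i.+1 f)).
Proof.
move=> i_gt0 i_lt.
have inj1 : injective (msubst (fun=> 1) (idx_swap i)) by apply: swap_inj; lia.
have inj2 : injective (msubst (fun=> 1) (idx_swap i.+1)) by apply: swap_inj; lia.
rewrite (s_opE i_gt0) (s_opE (ltn0Sn i)).
rewrite (rf_map_comp inj2 inj1) (rf_map_comp inj1 (inj_comp inj2 inj1)).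
rewrite (rf_map_comp inj1 inj2) (rf_map_comp inj2 (inj_comp inj1 inj2)).
apply: rf_map_ext => p /=; rewrite !msubst_comp; try by move=> k k_in; idx_lia.
by apply: msubst_ext => k k_in /=; [rewrite !mulr1 | idx_lia].
Qed.

Lemma s_op_comm i j f : (0 < i)%N -> (i.+1 < j)%N -> (j < n)%N ->
  s_op i (s_op j f) = s_op j (s_op i f).
Proof.
move=> i_gt0 ij j_lt.
have inj1 : injective (msubst (fun=> 1) (idx_swap i)) by apply: swap_inj; lia.
have inj2 : injective (msubst (fun=> 1) (idx_swap j)) by apply: swap_inj; lia.
rewrite (s_opE i_gt0) (s_opE (ltn_trans i_gt0 (ltnW ij))).
rewrite (rf_map_comp inj1 inj2) (rf_map_comp inj2 inj1).
apply: rf_map_ext => p /=; rewrite !msubst_comp; try by move=> k k_in; idx_lia.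
by apply: msubst_ext => k k_in /=; [rewrite !mulr1 | idx_lia].
Qed.

End Swaps.

Arguments s_opE {K n i}.
Arguments s_rmorph {K n i}.
Arguments s_opK {K n i}.

Section Rotation.
Variables (K : fieldType) (n : nat) (q : K).
Hypotheses (q_neq0 : q != 0) (n_gt0 : (0 < n)%N).
Local Notation RF := (RF K n).
Local Notation msubst := (@msubst K n).
Local Notation xr := (xr K n).
Local Notation cst := (@cst K n).
Local Notation s_op := (@s_op K n).
Local Notation omega := (@omega_op K n q).

Definition rot_coef (k : nat) : K := if k == 1 then q else 1.

Lemma tau_pol1E : tau_pol q 1 = msubst rot_coef id.
Proof.
rewrite /tau_pol /msubst.
suff -> : [tuple (if val j == 0 then q%:MP * 'X_j else 'X_j) | j < n]
        = [tuple rot_coef j.+1 *: xp K n j.+1 | j < n] by [].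
by apply: eq_mktuple => j; rewrite xp_ord /rot_coef eqSS; case: (_ == 0); rewrite ?mul_mpolyC ?scale1r.
Qed.

Lemma rot_inj m : (m < n)%N -> injective (msubst rot_coef (idx_rot m)).
Proof.
move=> m_lt; apply: (msubst_inj (s' := idx_unrot m)) => k k_in.
- by rewrite /rot_coef; case: ifP; rewrite ?oner_neq0.
- by idx_lia.
- by idx_lia.
Qed.

Lemma s_op_rot m f : (m < n)%N ->
  oprod (map s_op (rev (iota 1 m))) (rf_map (msubst rot_coef id) f)
  = rf_map (msubst rot_coef (idx_rot m)) f.
Proof.
elim: m => [|m IH] m_lt.
  by apply: rf_msubst_ext => // k k_in; idx_lia.
rewrite -[m.+1]addn1 iotaD rev_cat /= add1n !addn1 IH; last by lia.
have sw_inj : injective (msubst (fun=> 1) (idx_swap m.+1)) by apply: swap_inj; lia.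
have rot_m_inj : injective (msubst rot_coef (idx_rot m)) by apply: rot_inj; lia.
rewrite (s_opE (ltn0Sn m)) (rf_map_comp sw_inj rot_m_inj); apply: rf_map_ext => p /=.
rewrite msubst_comp; last by move=> k k_in; idx_lia.
by apply: msubst_ext => k k_in /=; [rewrite mulr1 | idx_lia].
Qed.

Let rot_inj_n : injective (msubst rot_coef (idx_rot n.-1)).
Proof. by apply: rot_inj; lia. Qed.

Lemma omega_opE f : omega f = rf_map (msubst rot_coef (idx_rot n.-1)) f.
Proof.
by rewrite /omega_op oprod_cat /= /tau_op tau_pol1E -s_op_rot //; lia.
Qed.

Definition omega_rmorph : {rmorphism RF -> RF} :=
  eq_rmorph (g := frac_rmorph rot_inj_n) omega_opE.

Lemma omega_cst a : omega (cst a) = cst a.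
Proof. by rewrite omega_opE rf_msubst_cst. Qed.

Lemma omega_xr k : (1 < k <= n)%N -> omega (xr k) = xr k.-1.
Proof.
move=> k_in; rewrite omega_opE rf_msubst_xr //; last by lia.
by rewrite /rot_coef ifN ?rmorph1 ?mul1r; [congr xr; idx_lia | lia].
Qed.

Lemma omega_s_op k f : (1 < k < n)%N -> omega (s_op k f) = s_op k.-1 (omega f).
Proof.
move=> k_in.
have inj1 : injective (msubst (fun=> 1) (idx_swap k)) by apply: swap_inj; lia.
have inj2 : injective (msubst (fun=> 1) (idx_swap k.-1)) by apply: swap_inj; lia.
rewrite (omega_opE (s_op k f)) (omega_opE f) (s_opE (ltnW (proj1 (andP k_in)))) s_opE; last by lia.
rewrite (rf_map_comp rot_inj_n inj1) (rf_map_comp inj2 rot_inj_n).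
apply: rf_map_ext => p /=; rewrite !msubst_comp; try by move=> j j_in; idx_lia.
apply: msubst_ext => j j_in /=; last by idx_lia.
rewrite mul1r mulr1 /rot_coef; congr (if _ then _ else _).
by apply/eqP/eqP; idx_lia.
Qed.

End Rotation.

(** * Demazure-Lustig operators *)

Section DemazureLustig.
Variables (F : fieldType) (c : F).

(* [T_op t i] unfolds to [dlop (cst t) (s_op i) (xr i) (xr i.+1)]. *)
Definition dlop (s : F -> F) (a b f : F) : F := c * f + (c * a - b) / (a - b) * (s f - f).

Section OneReflection.
Variables (s : {rmorphism F -> F}) (a b : F).

Lemma dlopD : {morph dlop s a b : f g / f + g}.
Proof. by move=> f g; rewrite /dlop rmorphD; ring. Qed.

Lemma dlop_mul_fixed e f : s e = e -> dlop s a b (e * f) = e * dlop s a b f.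
Proof. by move=> se; rewrite /dlop rmorphM se; ring. Qed.

Hypotheses (sK : involutive s) (sa : s a = b) (sb : s b = a) (sc : s c = c).
Hypothesis a_neq_b : a != b.
Let ab : a - b != 0. Proof. by rewrite subr_eq0. Qed.
Let ba : b - a != 0. Proof. by rewrite subr_eq0 eq_sym. Qed.

Lemma dlop_quadratic f : dlop s a b (dlop s a b f) = (c - 1) * dlop s a b f + c * f.
Proof.
rewrite /dlop !(rmorphD, rmorphN, rmorphM, fmorphV) ?sK ?sa ?sb ?sc.
by field; rewrite ab ba.
Qed.

Lemma dlop_invmul g : a != 0 -> b != 0 ->
  dlop s a b (b^-1 * dlop s a b g) = c * (a^-1 * g).
Proof.
move=> a0 b0; rewrite /dlop !(rmorphD, rmorphN, rmorphM, fmorphV) ?sK ?sa ?sb ?sc.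
by field; rewrite a0 b0 ab ba.
Qed.

End OneReflection.

Lemma dlop_braid (s1 s2 : {rmorphism F -> F}) (a b d : F) f :
    involutive s1 -> involutive s2 -> (forall g, s1 (s2 (s1 g)) = s2 (s1 (s2 g))) ->
    s1 a = b -> s1 b = a -> s1 d = d -> s2 a = a -> s2 b = d -> s2 d = b ->
    s1 c = c -> s2 c = c -> a != b -> b != d -> a != d ->
  dlop s1 a b (dlop s2 b d (dlop s1 a b f)) = dlop s2 b d (dlop s1 a b (dlop s2 b d f)).
Proof.
move=> s1K s2K braid s1a s1b s1d s2a s2b s2d s1c s2c ab bd ad.
rewrite /dlop !(rmorphD, rmorphN, rmorphM, fmorphV) s1K s2K.
rewrite ?(s1a, s1b, s1d, s2a, s2b, s2d, s1c, s2c) braid.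
by field; rewrite !subr_eq0 ab bd ad ![_ == a]eq_sym eq_sym bd.
Qed.

Lemma dlop_comm (s1 s2 : {rmorphism F -> F}) (a b d e : F) f :
    (forall g, s1 (s2 g) = s2 (s1 g)) ->
    s1 d = d -> s1 e = e -> s2 a = a -> s2 b = b -> s1 c = c -> s2 c = c ->
    a != b -> d != e ->
  dlop s1 a b (dlop s2 d e f) = dlop s2 d e (dlop s1 a b f).
Proof.
move=> s12 s1d s1e s2a s2b s1c s2c ab de.
rewrite /dlop !(rmorphD, rmorphN, rmorphM, fmorphV) s1d s1e s2a s2b s1c s2c s12.
by field; rewrite !subr_eq0 ab de.
Qed.

Lemma rmorph_dlop (w s s' : {rmorphism F -> F}) a b f :
    (forall g, w (s g) = s' (w g)) -> w c = c ->
  w (dlop s a b f) = dlop s' (w a) (w b) (w f).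
Proof. by move=> ws wc; rewrite /dlop !(rmorphD, rmorphN, rmorphM, fmorphV) ws wc. Qed.

End DemazureLustig.

Lemma mpolyX_eq (R : nzRingType) (n : nat) (i j : 'I_n) :
  ('X_i == 'X_j :> {mpoly R[n]}) = (i == j).
Proof.
apply/eqP/eqP => [/(congr1 (mcoeff U_(i)))|-> //].
by rewrite !mcoeffXU eqxx; case: eqP => // _ /eqP; rewrite oner_eq0.
Qed.

Lemma mpolyX_neq0 (R : nzRingType) (n : nat) (i : 'I_n) : 'X_i != 0 :> {mpoly R[n]}.
Proof.
apply/eqP => /(congr1 (mcoeff U_(i))).
by rewrite mcoeffXU eqxx mcoeff0 => /eqP; rewrite oner_eq0.
Qed.

Section DemazureLustigOperators.
Variables (K : fieldType) (n : nat) (t : K).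
Local Notation RF := (RF K n).
Local Notation xr := (xr K n).
Local Notation cst := (@cst K n).
Local Notation s_op := (@s_op K n).
Local Notation T := (@T_op K n t).

Lemma xr_ord (j : 'I_n) : xr j.+1 = ('X_j)%:F.
Proof. by rewrite /xr xp_ord. Qed.

Lemma xr_neq0 k : (0 < k <= n)%N -> xr k != 0.
Proof.
by case: k => // k k_lt; rewrite -[k]/(nat_of_ord (Ordinal k_lt)) xr_ord tofrac_eq0 mpolyX_neq0.
Qed.

Lemma xr_eq k l : (0 < k <= n)%N -> (0 < l <= n)%N -> (xr k == xr l) = (k == l).
Proof.
case: k => // k k_lt; case: l => // l l_lt.
rewrite -[k]/(nat_of_ord (Ordinal k_lt)) -[l]/(nat_of_ord (Ordinal l_lt)) !xr_ord.
by rewrite tofrac_eq mpolyX_eq eqSS.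
Qed.

Section OneIndex.
Variable i : nat.
Hypothesis i_in : (0 < i < n)%N.
Let s := s_rmorph (K := K) i_in.
Let i_range : (0 < i <= n)%N. Proof. lia. Qed.
Let i1_range : (0 < i.+1 <= n)%N. Proof. lia. Qed.
Let s_xr_i : s (xr i) = xr i.+1.
Proof. by rewrite /= s_op_xr // /idx_swap eqxx. Qed.
Let s_xr_i1 : s (xr i.+1) = xr i.
Proof. by rewrite /= s_op_xr //; congr xr; idx_lia. Qed.
Let s_cst a : s (cst a) = cst a. Proof. exact: s_op_cst. Qed.
Let xr_i_neq : xr i != xr i.+1. Proof. by rewrite xr_eq //; lia. Qed.

Lemma T_opD : {morph T i : f g / f + g}.
Proof. exact: (dlopD _ s). Qed.

Lemma T_op_cstM a f : T i (cst a * f) = cst a * T i f.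
Proof. exact: (dlop_mul_fixed _ _ _ _ (s_cst a)). Qed.

Lemma T_op_quadratic f : T i (T i f) = cst (t - 1) * T i f + cst t * f.
Proof.
rewrite rmorphB rmorph1.
exact: (dlop_quadratic (s := s) (s_opK i_in) s_xr_i s_xr_i1 (s_cst t) xr_i_neq).
Qed.

Lemma T_op_invmul g : T i ((xr i.+1)^-1 * T i g) = cst t * ((xr i)^-1 * g).
Proof.
exact: (dlop_invmul (s := s) (s_opK i_in) s_xr_i s_xr_i1 (s_cst t) xr_i_neq g
          (xr_neq0 i_range) (xr_neq0 i1_range)).
Qed.

Lemma T_op_xr_invM j g : (0 < j <= n)%N -> j != i -> j != i.+1 ->
  T i ((xr j)^-1 * g) = (xr j)^-1 * T i g.
Proof.
move=> j_in ji ji1.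
have s_xr_j : s (xr j)^-1 = (xr j)^-1 by rewrite fmorphV /= s_op_xr //; congr (xr _)^-1; idx_lia.
exact: (dlop_mul_fixed _ _ _ _ s_xr_j).
Qed.

End OneIndex.

Lemma T_op_braid i f : (0 < i)%N -> (i.+1 < n)%N ->
  T i (T i.+1 (T i f)) = T i.+1 (T i (T i.+1 f)).
Proof.
move=> i_gt0 i_lt.
have i_in : (0 < i < n)%N by lia.
have i1_in : (0 < i.+1 < n)%N by lia.
apply: (dlop_braid (s1 := s_rmorph (K := K) i_in) (s2 := s_rmorph (K := K) i1_in)).
- exact: s_opK.
- exact: s_opK.
- by move=> g; apply: s_op_braid.
all: rewrite /= ?s_op_cst ?s_op_xr ?xr_eq //; try (congr xr; idx_lia); lia.
Qed.

Lemma T_op_comm i j f : (0 < i)%N -> (i.+1 < j)%N -> (j < n)%N ->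
  T i (T j f) = T j (T i f).
Proof.
move=> i_gt0 ij j_lt.
have i_in : (0 < i < n)%N by lia.
have j_in : (0 < j < n)%N by lia.
apply: (dlop_comm (s1 := s_rmorph (K := K) i_in) (s2 := s_rmorph (K := K) j_in)).
- by move=> g; apply: s_op_comm.
all: rewrite /= ?s_op_cst ?s_op_xr ?xr_eq //; try (congr xr; idx_lia); lia.
Qed.

Lemma omega_T_op q k f : q != 0 -> (0 < k)%N -> (k.+1 < n)%N ->
  omega_op q (T k.+1 f) = T k (omega_op q f).
Proof.
move=> q_neq0 k_gt0 k_lt.
have n_gt0 : (0 < n)%N by lia.
have k_in : (0 < k < n)%N by lia.
have k1_in : (0 < k.+1 < n)%N by lia.
have omega_s g : omega_op q (s_op k.+1 g) = s_op k (omega_op q g).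
  by apply: omega_s_op => //; lia.
have omega_xr1 : omega_op q (xr k.+1) = xr k by apply: omega_xr => //; lia.
have omega_xr2 : omega_op q (xr k.+2) = xr k.+1 by apply: omega_xr => //; lia.
rewrite [RHS]/T_op -omega_xr2 -omega_xr1.
exact: (@rmorph_dlop _ _ (omega_rmorph q_neq0 n_gt0) (s_rmorph k1_in) (s_rmorph k_in)
          _ _ _ omega_s (omega_cst _ _ _)).
Qed.

End DemazureLustigOperators.

(** * Consequences of the Hecke relations *)

Section CstLinear.
Variables (K : fieldType) (n : nat).
Local Notation RF := (RF K n).
Local Notation cst := (@cst K n).

Definition cst_linear (A : RF -> RF) : Prop :=
  {morph A : f g / f + g} /\ forall a f, A (cst a * f) = cst a * A f.

Section Basics.
Variable A : RF -> RF.
Hypothesis A_lin : cst_linear A.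

Lemma cst_linearD : {morph A : f g / f + g}. Proof. by case: A_lin. Qed.

Lemma cst_linearZ a f : A (cst a * f) = cst a * A f. Proof. by case: A_lin. Qed.

Lemma cst_linear0 : A 0 = 0.
Proof. by have := cst_linearZ 0 0; rewrite rmorph0 !mul0r. Qed.

Lemma cst_linearN f : A (- f) = - A f.
Proof. by have := cst_linearZ (-1) f; rewrite rmorphN1 !mulN1r. Qed.

Lemma cst_linearB f g : A (f - g) = A f - A g.
Proof. by rewrite cst_linearD cst_linearN. Qed.

Lemma cst_linear_sum (I : Type) (r : seq I) (P : pred I) (G : I -> RF) :
  A (\sum_(i <- r | P i) G i) = \sum_(i <- r | P i) A (G i).
Proof. exact: (big_morph _ cst_linearD cst_linear0). Qed.

End Basics.

Lemma cst_linear_comp A B : cst_linear A -> cst_linear B -> cst_linear (A \o B).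
Proof.
move=> A_lin B_lin; split=> [f g|a f] /=; first by rewrite !cst_linearD.
by rewrite !cst_linearZ.
Qed.

Lemma cst_linear_oprod (G : nat -> RF -> RF) (s : seq nat) :
  (forall k, k \in s -> cst_linear (G k)) -> cst_linear (oprod (map G s)).
Proof.
elim: s => [|k s IH] G_lin /=; first by [].
apply: cst_linear_comp; first by apply: G_lin; rewrite inE eqxx.
by apply: IH => j j_s; apply: G_lin; rewrite inE j_s orbT.
Qed.

Lemma oprod_comm (A : RF -> RF) (G : nat -> RF -> RF) (s : seq nat) f :
    (forall k, k \in s -> forall g, A (G k g) = G k (A g)) ->
  A (oprod (map G s) f) = oprod (map G s) (A f).
Proof.
elim: s => [|k s IH] AG //=.
rewrite AG ?inE ?eqxx // IH // => j j_s g.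
by apply: AG; rewrite inE j_s orbT.
Qed.

End CstLinear.

Section HeckeRelations.
Variables (K : fieldType) (n : nat) (t : K).
Local Notation RF := (RF K n).
Local Notation xr := (xr K n).
Local Notation cst := (@cst K n).

Variables (T : nat -> RF -> RF) (omega : RF -> RF).
Hypothesis t_neq0 : t != 0.
Hypothesis T_linear : forall i, (0 < i < n)%N -> cst_linear (T i).
Hypothesis T_quadratic : forall i, (0 < i < n)%N -> forall f,
  T i (T i f) = cst (t - 1) * T i f + cst t * f.
Hypothesis T_braid : forall i f, (0 < i)%N -> (i.+1 < n)%N ->
  T i (T i.+1 (T i f)) = T i.+1 (T i (T i.+1 f)).
Hypothesis T_comm : forall i j f, (0 < i)%N -> (i.+1 < j)%N -> (j < n)%N ->
  T i (T j f) = T j (T i f).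

(* [Tinv] and, below, [Y] are variables with their defining equations rather than
   definitions, so that rewriting with the linearity of [T i] cannot unfold them. *)
Variable Tinv : nat -> RF -> RF.
Hypothesis TinvE : forall i f, Tinv i f = cst (t^-1 - 1) * f + cst t^-1 * T i f.

Section OneIndex.
Variable i : nat.
Hypothesis i_in : (0 < i < n)%N.
Let T_lin := T_linear i_in.

Lemma Tinv_linear : cst_linear (Tinv i).
Proof.
split=> [f g|a f]; rewrite !TinvE.
  by rewrite (cst_linearD T_lin) !mulrDr addrACA.
by rewrite (cst_linearZ T_lin) !mulrDr; congr (_ + _); apply: mulrCA.
Qed.

Let inv_coef_sum0 : t^-1 - 1 + t^-1 * (t - 1) = 0. Proof. by field. Qed.

Lemma T_TinvK : cancel (Tinv i) (T i).
Proof.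
move=> f; rewrite TinvE (cst_linearD T_lin) !(cst_linearZ T_lin) T_quadratic //.
rewrite mulrDr !mulrA -!rmorphM addrA -mulrDl -rmorphD inv_coef_sum0 rmorph0 mul0r add0r.
by rewrite mulVf // rmorph1 mul1r.
Qed.

Lemma Tinv_TK : cancel (T i) (Tinv i).
Proof.
move=> f; rewrite TinvE T_quadratic // mulrDr !mulrA -!rmorphM addrA -mulrDl -rmorphD.
by rewrite inv_coef_sum0 rmorph0 mul0r add0r mulVf // rmorph1 mul1r.
Qed.

Lemma T_via_Tinv f : T i f = cst t * Tinv i f + cst (t - 1) * f.
Proof.
rewrite TinvE mulrDr !mulrA -!rmorphM mulfV // rmorph1 mul1r addrAC -mulrDl -rmorphD.
have -> : t * (t^-1 - 1) + (t - 1) = 0 by field.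
by rewrite rmorph0 mul0r add0r.
Qed.

Lemma Tinv_quadratic f : Tinv i (Tinv i f) = cst (t^-1 - 1) * Tinv i f + cst t^-1 * f.
Proof. by rewrite TinvE T_TinvK. Qed.

End OneIndex.

Definition far (a b : nat) : bool := (a.+1 < b)%N || (b.+1 < a)%N.

Section TwoIndices.
Variables a b : nat.
Hypotheses (a_in : (0 < a < n)%N) (b_in : (0 < b < n)%N) (ab_far : far a b).

Lemma T_comm_far f : T a (T b f) = T b (T a f).
Proof. by case/orP: ab_far => ab; [apply: T_comm | symmetry; apply: T_comm]; lia. Qed.

Lemma T_Tinv_comm f : T a (Tinv b f) = Tinv b (T a f).
Proof.
by rewrite !TinvE (cst_linearD (T_linear a_in)) !(cst_linearZ (T_linear a_in)) T_comm_far.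
Qed.

End TwoIndices.

Section AdjacentIndices.
Variable a : nat.
Hypotheses (a_gt0 : (0 < a)%N) (a_lt : (a.+1 < n)%N).
Let a_in : (0 < a < n)%N. Proof. lia. Qed.
Let a1_in : (0 < a.+1 < n)%N. Proof. lia. Qed.

Lemma T_braid_Tinv f : T a.+1 (Tinv a (Tinv a.+1 f)) = Tinv a (Tinv a.+1 (T a f)).
Proof.
set g := T a.+1 _.
have <- : T a.+1 (T a g) = T a f by rewrite /g -T_braid // !T_TinvK.
by rewrite !Tinv_TK.
Qed.

Lemma Tinv_braid_T f : Tinv a.+1 (Tinv a (T a.+1 f)) = T a (Tinv a.+1 (Tinv a f)).
Proof.
set g := T a _.
have <- : T a (T a.+1 g) = T a.+1 f by rewrite /g T_braid // !T_TinvK.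
by rewrite !Tinv_TK.
Qed.

End AdjacentIndices.

Definition Tprod (a b : nat) : RF -> RF := oprod (map T (iota a b)).
Definition Tinvprod (a b : nat) : RF -> RF := oprod (map Tinv (iota a b)).
Definition Tinvprod_rev (a b : nat) : RF -> RF := oprod (map Tinv (rev (iota a b))).

Lemma Tprod_cat a b c f : Tprod a (b + c) f = Tprod a b (Tprod (a + b) c f).
Proof. by rewrite /Tprod iotaD map_cat oprod_cat. Qed.

Lemma Tinvprod_cat a b c f : Tinvprod a (b + c) f = Tinvprod a b (Tinvprod (a + b) c f).
Proof. by rewrite /Tinvprod iotaD map_cat oprod_cat. Qed.

Lemma Tprod_S a b f : Tprod a b.+1 f = T a (Tprod a.+1 b f).
Proof. by []. Qed.

Lemma Tinvprod_S a b f : Tinvprod a b.+1 f = Tinv a (Tinvprod a.+1 b f).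
Proof. by []. Qed.

Lemma Tinvprod_rcons a b f : Tinvprod a b.+1 f = Tinvprod a b (Tinv (a + b) f).
Proof. by rewrite -addn1 Tinvprod_cat. Qed.

Lemma Tinvprod_rev_S a b f : Tinvprod_rev a b.+1 f = Tinvprod_rev a.+1 b (Tinv a f).
Proof. by rewrite /Tinvprod_rev /= rev_cons -cats1 map_cat oprod_cat. Qed.

Lemma Tinvprod_linear a b : (0 < a)%N -> (a + b <= n)%N -> cst_linear (Tinvprod a b).
Proof.
move=> a_gt0 ab_le; apply: cst_linear_oprod => k; rewrite mem_iota => k_in.
by apply: Tinv_linear; lia.
Qed.

Lemma Tinvprod_rev_linear a b : (0 < a)%N -> (a + b <= n)%N -> cst_linear (Tinvprod_rev a b).
Proof.
move=> a_gt0 ab_le; apply: cst_linear_oprod => k; rewrite mem_rev mem_iota => k_in.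
by apply: Tinv_linear; lia.
Qed.

Section FarProducts.
Variables (i a b : nat).
Hypotheses (i_in : (0 < i < n)%N) (a_gt0 : (0 < a)%N) (ab_le : (a + b <= n)%N).
Hypothesis i_far : (i.+1 < a)%N || (a + b < i)%N.

Lemma T_Tprod_comm f : T i (Tprod a b f) = Tprod a b (T i f).
Proof.
apply: oprod_comm => k; rewrite mem_iota => k_in g.
by apply: T_comm_far; rewrite /far; lia.
Qed.

Lemma T_Tinvprod_comm f : T i (Tinvprod a b f) = Tinvprod a b (T i f).
Proof.
apply: oprod_comm => k; rewrite mem_iota => k_in g.
by apply: T_Tinv_comm; rewrite /far; lia.
Qed.

Lemma T_Tinvprod_rev_comm f : T i (Tinvprod_rev a b f) = Tinvprod_rev a b (T i f).
Proof.
apply: oprod_comm => k; rewrite mem_rev mem_iota => k_in g.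
by apply: T_Tinv_comm; rewrite /far; lia.
Qed.

End FarProducts.

Hypothesis omega_T : forall k f, (0 < k)%N -> (k.+1 < n)%N -> omega (T k.+1 f) = T k (omega f).

Variable Y : nat -> RF -> RF.
Hypothesis Y_def : forall i f, Y i f = cst (t ^- (n - i)) *
  oprod (map T (iota i (n - i)) ++ [:: omega] ++ map Tinv (iota 1 i.-1)) f.

Lemma YE i f :
  Y i f = cst (t ^- (n - i)) * Tprod i (n - i) (omega (Tinvprod 1 i.-1 f)).
Proof. by rewrite Y_def !oprod_cat. Qed.

Lemma T_Y_T i f : (0 < i < n)%N -> T i (Y i.+1 (T i f)) = cst t * Y i f.
Proof.
move=> i_in; rewrite !YE (cst_linearZ (T_linear i_in)) /=.
have -> : Tinvprod 1 i (T i f) = Tinvprod 1 i.-1 f.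
  case: i i_in => // i i_in.
  by rewrite Tinvprod_rcons add1n Tinv_TK.
have -> : (n - i = (n - i.+1).+1)%N by lia.
rewrite mulrA -rmorphM; congr (cst _ * _).
by rewrite exprS invfM mulrA mulfV // mul1r.
Qed.

Lemma T_Tprod_braid j k g : (0 < j <= k)%N -> (k.+1 < n)%N ->
  T k.+1 (Tprod j (n - j) g) = Tprod j (n - j) (T k g).
Proof.
move=> jk k_lt; have -> : (n - j = (k - j) + (n - k.+2).+2)%N by lia.
rewrite !Tprod_cat !Tprod_S; have -> : (j + (k - j) = k)%N by lia.
rewrite T_Tprod_comm; [|lia..]; rewrite -T_braid; [|lia..].
by rewrite T_Tprod_comm; [|lia..].
Qed.

Lemma T_Tinvprod_braid i m g : (0 < i)%N -> (i < m)%N -> (m < n)%N ->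
  T i.+1 (Tinvprod 1 m g) = Tinvprod 1 m (T i g).
Proof.
move=> i_gt0 im m_lt; have -> : (m = i.-1 + (m - i.+1).+2)%N by lia.
rewrite !Tinvprod_cat !Tinvprod_S; have -> : (1 + i.-1 = i)%N by lia.
rewrite T_Tinvprod_comm; [|lia..]; rewrite T_braid_Tinv; [|lia..].
by rewrite T_Tinvprod_comm; [|lia..].
Qed.

Lemma T_Y_comm i j f : (0 < i < n)%N -> (0 < j <= n)%N -> j != i -> j != i.+1 ->
  T i (Y j f) = Y j (T i f).
Proof.
move=> i_in j_in /eqP ji /eqP ji1; rewrite !YE (cst_linearZ (T_linear i_in)).
congr (_ * _); have [ij | ji'] := ltnP i.+1 j.
- rewrite T_Tprod_comm; [|lia..]; rewrite -omega_T; [|lia..].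
  by rewrite T_Tinvprod_braid; [|lia..].
- case: i i_in ji ji1 ji' => // k k_in ji ji1 ji'.
  rewrite T_Tprod_braid; [|lia..]; rewrite -omega_T; [|lia..].
  by rewrite T_Tinvprod_comm; [|lia..].
Qed.

Definition Tinv_chain (i j : nat) : RF -> RF :=
  oprod (map Tinv (iota i (j - i)) ++ map Tinv (rev (iota i (j.-1 - i)))).

Lemma Tinv_chainE i j f : Tinv_chain i j f = Tinvprod i (j - i) (Tinvprod_rev i (j.-1 - i) f).
Proof. exact: oprod_cat. Qed.

Lemma Tinv_chain_next j f : Tinv_chain j j.+1 f = Tinv j f.
Proof. by rewrite Tinv_chainE subSnn subnn. Qed.

Lemma Tinv_chain_rec j k f : (j.+2 <= k)%N ->
  Tinv_chain j k f = Tinv j (Tinv_chain j.+1 k (Tinv j f)).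
Proof.
move=> jk; rewrite !Tinv_chainE.
have -> : (k - j = (k - j.+1).+1)%N by lia.
have -> : (k.-1 - j = (k.-1 - j.+1).+1)%N by lia.
by rewrite Tinvprod_S Tinvprod_rev_S.
Qed.

Lemma Tinv_chain_linear j k : (0 < j < k)%N -> (k <= n)%N -> cst_linear (Tinv_chain j k).
Proof.
move=> jk k_le; set A := Tinvprod j (k - j) \o Tinvprod_rev j (k.-1 - j).
have A_lin : cst_linear A.
  by apply: cst_linear_comp; [apply: Tinvprod_linear | apply: Tinvprod_rev_linear]; lia.
by split=> [f g|a f]; rewrite !Tinv_chainE; [apply: (cst_linearD A_lin) | apply: (cst_linearZ A_lin)].
Qed.

Lemma T_Tinv_chain_comm i j k f : (0 < i < n)%N -> (i.+1 < j)%N -> (j < k <= n)%N ->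
  T i (Tinv_chain j k f) = Tinv_chain j k (T i f).
Proof.
move=> i_in ij jk; rewrite !Tinv_chainE.
by rewrite T_Tinvprod_comm ?T_Tinvprod_rev_comm //; lia.
Qed.

Definition dunkl_sum (j : nat) (g : RF) : RF :=
  \sum_(j.+1 <= k < n.+1) cst (t ^+ (k - j)) * Tinv_chain j k g.

Lemma dunkl_sum_linear j : (0 < j)%N -> cst_linear (dunkl_sum j).
Proof.
move=> j_gt0; split=> [f g|a f]; rewrite /dunkl_sum.
  rewrite -big_split; apply: eq_big_nat => k k_in /=.
  by rewrite (cst_linearD (Tinv_chain_linear _ _)) 1?mulrDr //; lia.
rewrite mulr_sumr; apply: eq_big_nat => k k_in /=.
rewrite (cst_linearZ (Tinv_chain_linear _ _)) 1?mulrCA //; lia.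
Qed.

Lemma dunkl_sum_rec j g : (0 < j < n)%N ->
  dunkl_sum j g = cst t * Tinv j g + cst t * Tinv j (dunkl_sum j.+1 (Tinv j g)).
Proof.
move=> j_in; rewrite /dunkl_sum big_ltn; last by lia.
rewrite subSnn expr1 Tinv_chain_next; congr (_ + _).
rewrite (cst_linear_sum (Tinv_linear j_in)) mulr_sumr.
apply: eq_big_nat => k k_in /=; rewrite Tinv_chain_rec; last by lia.
rewrite (cst_linearZ (Tinv_linear j_in)) mulrA -rmorphM.
have -> : (k - j = (k - j.+1).+1)%N by lia.
by rewrite exprS.
Qed.

Lemma T_dunkl_sum_comm_above i j g : (0 < i < n)%N -> (i.+1 < j)%N ->
  T i (dunkl_sum j g) = dunkl_sum j (T i g).
Proof.
move=> i_in ij; rewrite /dunkl_sum (cst_linear_sum (T_linear i_in)).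
apply: eq_big_nat => k k_in.
by rewrite (cst_linearZ (T_linear i_in)) T_Tinv_chain_comm //; lia.
Qed.

Lemma T_dunkl_sum_base a g : (0 < a)%N -> (a.+1 < n)%N ->
  T a.+1 (dunkl_sum a g) = dunkl_sum a (T a.+1 g).
Proof.
move=> a_gt0 a_lt.
have a_in : (0 < a < n)%N by lia.
have a1_in : (0 < a.+1 < n)%N by lia.
have Tinv_lin := Tinv_linear a_in; have T_lin := T_linear a1_in.
rewrite !(dunkl_sum_rec _ a_in) !(dunkl_sum_rec _ a1_in).
rewrite !(cst_linearD Tinv_lin, cst_linearZ Tinv_lin) !(cst_linearD T_lin, cst_linearZ T_lin).
set W := dunkl_sum a.+2.
have E1 : T a.+1 (Tinv a (Tinv a.+1 (Tinv a g))) = Tinv a (Tinv a.+1 g).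
  by rewrite T_braid_Tinv // T_TinvK.
have E2 : T a.+1 (Tinv a (Tinv a.+1 (W (Tinv a.+1 (Tinv a g))))) =
          Tinv a (Tinv a.+1 (W (Tinv a.+1 (Tinv a (T a.+1 g))))).
  by rewrite T_braid_Tinv // /W T_dunkl_sum_comm_above // -Tinv_braid_T.
have E3 : Tinv a (Tinv a.+1 (Tinv a (T a.+1 g))) = Tinv a.+1 (Tinv a g).
  by rewrite Tinv_braid_T // Tinv_TK.
have E4 : T a.+1 (Tinv a g) = cst t * Tinv a.+1 (Tinv a g) + cst (t - 1) * Tinv a g.
  exact: T_via_Tinv.
have E5 : Tinv a (T a.+1 g) = cst t * Tinv a (Tinv a.+1 g) + cst (t - 1) * Tinv a g.
  by rewrite T_via_Tinv // (cst_linearD Tinv_lin) !(cst_linearZ Tinv_lin).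
rewrite E2 E1 E3 E4 E5; ring.
Qed.

Lemma T_dunkl_sum_comm_below k j g : (0 < j)%N -> (j + k.+1 < n)%N ->
  T (j + k.+1) (dunkl_sum j g) = dunkl_sum j (T (j + k.+1) g).
Proof.
elim: k j g => [|k IH] j g j_gt0 jk_lt; first by rewrite addn1 T_dunkl_sum_base //; lia.
have j_in : (0 < j < n)%N by lia.
have i_in : (0 < j + k.+2 < n)%N by lia.
have T_Tinv_j h : T (j + k.+2) (Tinv j h) = Tinv j (T (j + k.+2) h).
  by apply: T_Tinv_comm => //; rewrite /far; lia.
rewrite !(dunkl_sum_rec _ j_in) (cst_linearD (T_linear i_in)) !(cst_linearZ (T_linear i_in)).
rewrite !T_Tinv_j; have jk : (j + k.+2 = j.+1 + k.+1)%N by lia.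
by rewrite jk IH -?jk ?T_Tinv_j //; lia.
Qed.

Lemma T_dunkl_sum_comm i j g : (0 < i < n)%N -> (0 < j)%N -> j != i -> j != i.+1 ->
  T i (dunkl_sum j g) = dunkl_sum j (T i g).
Proof.
move=> i_in j_gt0 /eqP ji /eqP ji1; have [ij | ji'] := ltnP i.+1 j.
  exact: T_dunkl_sum_comm_above.
have -> : i = (j + (i - j.+1).+1)%N by lia.
by apply: T_dunkl_sum_comm_below; lia.
Qed.

Hypothesis T_invmul : forall i, (0 < i < n)%N -> forall g,
  T i ((xr i.+1)^-1 * T i g) = cst t * ((xr i)^-1 * g).
Hypothesis T_xr_invM : forall i, (0 < i < n)%N -> forall j g,
  (0 < j <= n)%N -> j != i -> j != i.+1 ->
  T i ((xr j)^-1 * g) = (xr j)^-1 * T i g.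

Definition dunkl (i : nat) (f : RF) : RF :=
  (xr i)^-1 * (f - cst (t ^+ n.-1) * (Y i f + cst (t^-1 - 1) * dunkl_sum i (Y i f))).

Let cst_t_tinvK f : cst t * (cst t^-1 * f) = f.
Proof. by rewrite mulrA -rmorphM mulfV // rmorph1 mul1r. Qed.

Lemma T_dunkl_succ i f : (0 < i < n)%N -> T i (dunkl i.+1 f) = cst t * dunkl i (Tinv i f).
Proof.
move=> i_in; have Tinv_lin := Tinv_linear i_in.
have T_xr_inv h : T i ((xr i.+1)^-1 * h) = cst t * ((xr i)^-1 * Tinv i h).
  by rewrite -{1}(T_TinvK i_in h) T_invmul.
rewrite /dunkl T_xr_inv; congr (cst t * ((xr i)^-1 * _)).
rewrite (cst_linearB Tinv_lin) (cst_linearZ Tinv_lin); congr (_ - cst _ * _).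
set u := Y i (Tinv i f).
have Y_succ : Y i.+1 f = cst t * Tinv i u.
  have := T_Y_T (Tinv i f) i_in; rewrite T_TinvK // => E.
  by rewrite -[LHS](Tinv_TK i_in) E (cst_linearZ Tinv_lin).
rewrite Y_succ !(cst_linearD Tinv_lin, cst_linearZ Tinv_lin, cst_linearZ (dunkl_sum_linear _)) //.
rewrite (dunkl_sum_rec _ i_in) Tinv_quadratic // mulrDr cst_t_tinvK.
ring.
Qed.

Lemma T_dunkl i f : (0 < i < n)%N -> T i (dunkl i f) = dunkl i.+1 (T i f) + cst (t - 1) * dunkl i f.
Proof.
move=> i_in.
have -> : dunkl i.+1 (T i f) = cst t * Tinv i (dunkl i f).
  have := T_dunkl_succ (T i f) i_in; rewrite Tinv_TK // => E.
  by rewrite -[LHS](Tinv_TK i_in) E (cst_linearZ (Tinv_linear i_in)).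
rewrite TinvE mulrDr cst_t_tinvK mulrA -rmorphM.
have -> : t * (t^-1 - 1) = - (t - 1) by field.
by rewrite rmorphN; ring.
Qed.

Lemma T_dunkl_comm i j f : (0 < i < n)%N -> (0 < j <= n)%N -> j != i -> j != i.+1 ->
  T i (dunkl j f) = dunkl j (T i f).
Proof.
move=> i_in j_in ji ji1; have T_lin := T_linear i_in.
rewrite /dunkl T_xr_invM //; congr (_ * _).
rewrite (cst_linearB T_lin) (cst_linearZ T_lin) (cst_linearD T_lin) (cst_linearZ T_lin).
by rewrite T_dunkl_sum_comm ?T_Y_comm //; lia.
Qed.

End HeckeRelations.

(* [Tinv_op], [Y_op], [Tinv_ij] and [D_op] are, by definition, the operators [Tinv],
   [Y], [Tinv_chain] and [dunkl] above for [T := T_op t] and [omega := omega_op q]. *)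
Section DunklRelations.
Variables (K : fieldType) (n : nat) (q t : K).
Hypotheses (q_neq0 : q != 0) (t_neq0 : t != 0).
Local Notation RF := (RF K n).
Local Notation cst := (@cst K n).
Local Notation T := (@T_op K n t).
Local Notation Tinv := (@Tinv_op K n t).
Local Notation omega := (@omega_op K n q).
Local Notation D := (@D_op K n q t).

Let T_linear i : (0 < i < n)%N -> cst_linear (T i).
Proof. by move=> i_in; split; [apply: T_opD | apply: T_op_cstM]. Qed.

Let omega_T k f : (0 < k)%N -> (k.+1 < n)%N -> omega (T k.+1 f) = T k (omega f).
Proof. exact: omega_T_op. Qed.

Let Y_def i f : Y_op q t i f = cst (t ^- (n - i)) *
  oprod (map T (iota i (n - i)) ++ [:: omega] ++ map Tinv (iota 1 i.-1)) f.
Proof. by []. Qed.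

Let TinvE i f : Tinv i f = cst (t^-1 - 1) * f + cst t^-1 * T i f.
Proof. by []. Qed.

Lemma T_op_D_op_succ i f : (0 < i < n)%N -> T i (D i.+1 f) = cst t * D i (Tinv i f).
Proof.
exact: (T_dunkl_succ t_neq0 T_linear (@T_op_quadratic K n t) TinvE Y_def
          (@T_op_invmul K n t)).
Qed.

Lemma T_op_D_op i f : (0 < i < n)%N ->
  T i (D i f) = D i.+1 (T i f) + cst (t - 1) * D i f.
Proof.
exact: (T_dunkl t_neq0 T_linear (@T_op_quadratic K n t) TinvE Y_def (@T_op_invmul K n t)).
Qed.

Lemma T_op_D_op_comm i j f : (0 < i < n)%N -> (0 < j <= n)%N -> j != i -> j != i.+1 ->
  T i (D j f) = D j (T i f).
Proof.
exact: (T_dunkl_comm t_neq0 T_linear (@T_op_quadratic K n t) (@T_op_braid K n t)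
          (@T_op_comm K n t) TinvE omega_T Y_def (@T_op_xr_invM K n t)).
Qed.

End DunklRelations.

Theorem lemma3p1 (n : nat) : (2 <= n)%N ->
  forall f : RF Qqt n, laurent f ->
  (forall i : nat, (1 <= i <= n.-1)%N ->
     T_op t0 i (D_op q0 t0 i.+1 f) = cst n t0 * D_op q0 t0 i (Tinv_op t0 i f)
  /\ T_op t0 i (D_op q0 t0 i f)
       = D_op q0 t0 i.+1 (T_op t0 i f) + cst n (t0 - 1) * D_op q0 t0 i f)
  /\ (forall i j : nat, (1 <= i <= n.-1)%N -> (1 <= j <= n)%N ->
        j != i -> j != i.+1 ->
        T_op t0 i (D_op q0 t0 j f) = D_op q0 t0 j (T_op t0 i f)).
Proof.
(* The relations hold on all rational functions. *)
move=> n_ge2 f _.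
have q0_neq0 : q0 != 0 by rewrite tofrac_eq0 mpolyX_neq0.
have t0_neq0 : t0 != 0 by rewrite tofrac_eq0 mpolyX_neq0.
split=> [i i_in | i j i_in j_in ji ji1].
  have i_in' : (0 < i < n)%N by lia.
  split; [exact: (T_op_D_op_succ q0 t0_neq0 f i_in') | exact: (T_op_D_op q0 t0_neq0 f i_in')].
have i_in' : (0 < i < n)%N by lia.
have j_in' : (0 < j <= n)%N by lia.
exact: (T_op_D_op_comm q0_neq0 t0_neq0 f i_in' j_in' ji ji1).
Qed.
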